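(* Let $\delta\in\mathbb{C}\setminus\{0\}$ with $\mathrm{Re}(\delta)\ge0$, and let $r\in\mathbb{Z}_{\ge1}$. Then $$P^{\lfloor \mathrm{Re}(\delta)\rfloor+1}\big[X^{\delta}q_r(\alpha)\big](X)\longrightarrow 0\quad\text{classically as } X\to\infty .$$
   Context: For $X>0$ write $X=k+\alpha$ with $k=\lfloor X\rfloor$, $\alpha=X-\lfloor X\rfloor\in[0,1)$; $X^\delta$ is the principal power. $P[f](X)=\frac1X\int_0^X f(x)\,dx$ for locally integrable $f$ on $(0,\infty)$. The polynomials $q_n$ are defined by $q_1(\alpha)=\alpha-\tfrac12$ and, for $n\ge1$, $q_{n+1}$ is the unique polynomial with $q_{n+1}'=q_n$ and $\int_0^1 q_{n+1}(\alpha)\,d\alpha=0$ (e.g. $q_2(\alpha)=\tfrac12\alpha^2-\tfrac12\alpha+\tfrac1{12}$); $q_r(\alpha)$ is regarded as a period-1 function of $X$. *)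

From Stdlib Require Import Reals.
From Coquelicot Require Import Coquelicot.
Open Scope R_scope.

(* Principal power X^delta = exp(delta * ln X) for X > 0, written out:
   exp((a + i b) ln X) = X^a (cos(b ln X) + i sin(b ln X)). *)
Definition cpow (X : R) (delta : C) : C :=
  (exp (Re delta * ln X) * cos (Im delta * ln X),
   exp (Re delta * ln X) * sin (Im delta * ln X)).

Fixpoint q (n : nat) : R -> R :=
  match n with
  | O => fun _ => 0
  | S O => fun a => a - / 2
  | S m => fun a =>
      RInt (q m) 0 a - RInt (fun t => RInt (q m) 0 t) 0 1
  end.

Definition Pavg (f : R -> C) : R -> C :=
  fun X => Cmult (RtoC (/ X)) (RInt (V := C_R_CompleteNormedModule) f 0 X).

Definition fdq (delta : C) (r : nat) : R -> C :=
  fun X => Cmult (cpow X delta) (RtoC (q r (frac_part X))).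

(* Write delta = a + i b.  The real and imaginary parts of X^delta q_r(alpha) are
   F_th(X) = X^a cos(b ln X + th) q_r(alpha) with th = 0 and th = -PI/2.  On [1, oo),
   integrating by parts against q_(r+1), an antiderivative of q_r that is continuous across
   the integers because q_(r+1)(0) = q_(r+1)(1), gives
     P[F_(a,th,r)] = F_(a-1,th,r+1) + c/X - a P[F_(a-1,th,r+1)] + b P[F_(a-1,th-PI/2,r+1)],
   so each average lowers the exponent by one, while P preserves limits 0 (Cesaro).  After
   floor(a)+1 averages the exponent is negative, where F -> 0 since q_r is bounded.  The part
   of the integral over [0, 1] only adds a term c/X. *)

From Stdlib Require Import Reals Lra Lia List ZArith.
From Coquelicot Require Import Coquelicot.
Open Scope R_scope.

(** * Riemann integrability up to the endpoint 0 *)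

Definition step_at (c u v x : R) : R := if Rle_dec c x then v else u.

Lemma adapted_couple_step_at a c b u v : a <= c <= b ->
  adapted_couple (step_at c u v) a b (a :: c :: b :: nil) (u :: v :: nil).
Proof.
  intros Hc; repeat split.
  - intros [|[|i]] Hi; simpl in *; lra || lia.
  - simpl; unfold Rmin; destruct Rle_dec; lra.
  - simpl; unfold Rmax; destruct Rle_dec; lra.
  - intros [|[|i]] Hi x [Hx1 Hx2]; simpl in *; unfold step_at;
      destruct Rle_dec; lra || lia.
Qed.

Lemma IsStepFun_step_at a c b u v : a <= c <= b -> IsStepFun (step_at c u v) a b.
Proof.
  intros Hc; exists (a :: c :: b :: nil), (u :: v :: nil).
  exact (adapted_couple_step_at a c b u v Hc).
Qed.

Lemma RiemannInt_SF_step_at a c b u v (Hc : a <= c <= b) :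
  RiemannInt_SF (mkStepFun (IsStepFun_step_at a c b u v Hc)) = u * (c - a) + v * (b - c).
Proof.
  unfold RiemannInt_SF, subdivision_val, subdivision; simpl pre.
  case (IsStepFun_step_at a c b u v Hc) as [l [lf Hl]]; simpl.
  rewrite (StepFun_P17 Hl (adapted_couple_step_at a c b u v Hc)).
  destruct Rle_dec; simpl; [ring|lra].
Qed.

Lemma ex_RInt_0_of_bounded (f : R -> R) (X M : R) : 0 < X ->
  (forall x, 0 <= x <= X -> Rabs (f x) <= M) ->
  (forall e, 0 < e < X -> ex_RInt f e X) -> ex_RInt f 0 X.
Proof.
  intros HX HM Hint; apply ex_RInt_Reals_1; intros eps.
  pose proof (cond_pos eps) as Heps.
  set (M' := Rabs M + 1).
  assert (HM' : 0 < M') by (unfold M'; pose proof (Rabs_pos M); lra).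
  set (eta := Rmin (X / 2) (eps / (4 * M'))).
  assert (Heta : 0 < eta < X).
  { split; [apply Rmin_glb_lt; [lra | apply Rdiv_lt_0_compat; lra]|].
    apply Rle_lt_trans with (X / 2); [apply Rmin_l | lra]. }
  assert (Heta_eps : M' * eta <= eps / 4).
  { apply Rle_trans with (M' * (eps / (4 * M')));
      [apply Rmult_le_compat_l; [lra | apply Rmin_r] | right; field; lra]. }
  (* [g] is integrable, and [|f - g|] is dominated by the step function [M' 1_[0,eta)],
     whose integral is small *)
  set (g x := if Rle_dec eta x then f x else 0).
  assert (Hg : ex_RInt g 0 X).
  { apply (ex_RInt_Chasles _ _ eta).
    - apply (ex_RInt_ext (fun _ => 0)); [|apply ex_RInt_const].
      intros x Hx; rewrite Rmin_left, Rmax_right in Hx by lra.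
      unfold g; destruct Rle_dec; [lra | reflexivity].
    - apply (ex_RInt_ext f); [|apply Hint; lra].
      intros x Hx; rewrite Rmin_left, Rmax_right in Hx by lra.
      unfold g; destruct Rle_dec; [reflexivity | lra]. }
  assert (Heps2 : 0 < eps / 2) by lra.
  destruct (ex_RInt_Reals_0 _ _ _ Hg (mkposreal _ Heps2)) as [phi [psi [Hphi Hpsi]]].
  assert (Hcut : 0 <= eta <= X) by lra.
  set (ind := mkStepFun (IsStepFun_step_at 0 eta X M' 0 Hcut)).
  exists phi, (mkStepFun (StepFun_P28 1 psi ind)); split.
  - intros t Ht; cbn -[Rle_dec].
    replace (f t - phi t) with ((f t - g t) + (g t - phi t)) by ring.
    eapply Rle_trans; [apply Rabs_triang|].
    rewrite Rmult_1_l, Rplus_comm; apply Rplus_le_compat; [apply Hphi, Ht|].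
    rewrite Rmin_left, Rmax_right in Ht by lra.
    unfold g, step_at; destruct Rle_dec.
    + rewrite Rminus_diag, Rabs_R0; lra.
    + rewrite Rminus_0_r; eapply Rle_trans; [apply HM; lra|].
      unfold M'; pose proof (Rle_abs M); lra.
  - rewrite StepFun_P30; unfold ind; rewrite RiemannInt_SF_step_at.
    eapply Rle_lt_trans; [apply Rabs_triang|].
    rewrite (Rabs_right (1 * _)) by (apply Rle_ge; nra).
    simpl in Hpsi; lra.
Qed.

Lemma continuous_RInt_0 (f : R -> R) x :
  (forall y, ex_RInt f 0 y) -> continuous (RInt f 0) x.
Proof.
  intros Hf; apply (continuous_RInt_1 f 0 x); apply filter_forall; intros y.
  apply (@RInt_correct R_CompleteNormedModule), Hf.
Qed.

(** * The polynomials q_n *)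

Lemma q_SS n : q (S (S n)) = fun a => RInt (q (S n)) 0 a - RInt (fun t => RInt (q (S n)) 0 t) 0 1.
Proof. reflexivity. Qed.

Lemma continuous_q n x : continuous (q n) x.
Proof.
  revert x; destruct n as [|n]; [intros x; apply continuous_const|].
  induction n as [|n IH]; intros x.
  - apply (continuous_minus (fun y => y) (fun _ => / 2));
      [apply continuous_id | apply continuous_const].
  - rewrite q_SS; apply (continuous_minus (RInt (q (S n)) 0)); [|apply continuous_const].
    apply continuous_RInt_0; intros y.
    apply (@ex_RInt_continuous R_CompleteNormedModule); intros z _; apply IH.
Qed.

Lemma ex_RInt_q n a b : ex_RInt (q n) a b.
Proof. apply (@ex_RInt_continuous R_CompleteNormedModule); intros z _; apply continuous_q. Qed.

Lemma is_derive_q n x : (1 <= n)%nat -> is_derive (q (S n)) x (q n x).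
Proof.
  intros Hn; destruct n as [|n]; [lia|]; rewrite q_SS.
  rewrite <- (Rminus_0_r (q (S n) x)).
  apply (is_derive_minus (RInt (q (S n)) 0)); [|apply (@is_derive_const R_AbsRing R_NormedModule)].
  apply is_derive_RInt with 0; [|apply continuous_q].
  apply filter_forall; intros y; apply (@RInt_correct R_CompleteNormedModule), ex_RInt_q.
Qed.

Lemma RInt_q_0_1 n : (1 <= n)%nat -> RInt (q n) 0 1 = 0.
Proof.
  intros Hn; destruct n as [|[|n]]; [lia| |].
  - pose proof (@is_RInt_derive R_CompleteNormedModule (fun t => t * t / 2 - t / 2) (q 1) 0 1)
      as H.
    rewrite (is_RInt_unique _ _ _ _ (H ltac:(intros x _; simpl; auto_derive; [auto | field])
                                        ltac:(intros x _; apply continuous_q))).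
    unfold minus, plus, opp; simpl; field.
  - rewrite q_SS, (RInt_minus (RInt (q (S n)) 0) (fun _ => RInt (RInt (q (S n)) 0) 0 1)),
      RInt_const; [| |apply ex_RInt_const].
    + unfold minus, plus, opp, scal; simpl; unfold mult; simpl; ring.
    + apply (@ex_RInt_continuous R_CompleteNormedModule); intros z _.
      apply continuous_RInt_0; intros y; apply ex_RInt_q.
Qed.

Lemma q_S_1 n : (1 <= n)%nat -> q (S n) 1 = q (S n) 0.
Proof.
  intros Hn; destruct n as [|n]; [lia|]; rewrite q_SS; cbv beta.
  rewrite RInt_point, (RInt_q_0_1 (S n) Hn); reflexivity.
Qed.

Lemma q_frac_bounded r : exists Mq, forall x, Rabs (q r (frac_part x)) <= Mq.
Proof.
  destruct (continuity_ab_maj (fun x => Rabs (q r x)) 0 1) as [y [Hy _]]; [lra| |].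
  { intros c _; apply continuity_pt_filterlim, continuous_comp;
      [apply continuous_q | apply continuous_Rabs]. }
  exists (Rabs (q r y)); intros x; apply Hy.
  destruct (base_fp x); lra.
Qed.

(** * Averaging *)

Definition avg (g : R -> R) (X : R) : R := / X * RInt g 0 X.

Definition locally_integrable (g : R -> R) : Prop := forall X, 0 <= X -> ex_RInt g 0 X.

Section Averaging.

Variables g h : R -> R.
Hypotheses (Hg : locally_integrable g) (Hh : locally_integrable h).

Lemma locally_integrable_ex_RInt a b : 0 <= a <= b -> ex_RInt g a b.
Proof. intros Hab; apply (ex_RInt_Chasles_2 g 0); [lra | apply Hg; lra]. Qed.

Lemma locally_integrable_bounded X :
  0 <= X -> exists M, forall x, 0 <= x <= X -> Rabs (g x) <= M.
Proof.
  intros HX; destruct (ex_RInt_ub g 0 X (Hg X HX)) as [M HM]; exists M.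
  intros x Hx; apply HM; rewrite Rmin_left, Rmax_right; lra.
Qed.

(* at [X = 0] the average is [/ 0 * 0 = 0] *)
Lemma abs_avg_le X M : 0 <= X -> (forall x, 0 <= x <= X -> Rabs (g x) <= M) ->
  Rabs (avg g X) <= M.
Proof.
  intros HX HM; unfold avg; destruct (Rle_lt_or_eq_dec 0 X HX) as [HX0|<-].
  - rewrite Rabs_mult, Rabs_inv, Rabs_right by lra.
    apply (Rmult_le_reg_l X); [lra|]; rewrite <- Rmult_assoc, Rinv_r, Rmult_1_l by lra.
    rewrite <- (Rminus_0_r X) at 2; apply abs_RInt_le_const; auto.
  - rewrite RInt_point; unfold zero; simpl; rewrite Rmult_0_r, Rabs_R0.
    apply Rle_trans with (Rabs (g 0)); [apply Rabs_pos | apply HM; lra].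
Qed.

Lemma continuous_avg z : 0 < z -> continuous (avg g) z.
Proof.
  intros Hz; apply (continuous_mult (fun X => / X) (RInt g 0));
    [apply continuous_Rinv; lra|].
  apply (continuous_RInt_1 g 0 z), (locally_interval _ z 0 p_infty); [exact Hz | exact I|].
  intros y Hy _; apply (@RInt_correct R_CompleteNormedModule), Hg; simpl in Hy; lra.
Qed.

Lemma locally_integrable_avg : locally_integrable (avg g).
Proof.
  intros X HX; destruct (Rle_lt_or_eq_dec 0 X HX) as [HX0|<-]; [|apply ex_RInt_point].
  destruct (locally_integrable_bounded X HX) as [M HM].
  apply (ex_RInt_0_of_bounded _ X M HX0).
  - intros x Hx; apply abs_avg_le; [lra|]; intros t Ht; apply HM; lra.
  - intros e He; apply (@ex_RInt_continuous R_CompleteNormedModule); intros z Hz.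
    rewrite Rmin_left in Hz by lra; apply continuous_avg; lra.
Qed.

Lemma locally_integrable_plus_scal c : locally_integrable (fun x => g x + c * h x).
Proof.
  intros X HX; apply (@ex_RInt_plus R_NormedModule g (fun x => scal c (h x)));
    [apply Hg, HX | apply (@ex_RInt_scal R_NormedModule), Hh, HX].
Qed.

Lemma avg_plus_scal c X : 0 <= X -> avg (fun x => g x + c * h x) X = avg g X + c * avg h X.
Proof.
  intros HX; unfold avg.
  change (fun x => g x + c * h x) with (fun x => plus (g x) (scal c (h x))).
  rewrite (@RInt_plus R_CompleteNormedModule), (@RInt_scal R_CompleteNormedModule);
    [| apply Hh, HX | apply Hg, HX | apply (@ex_RInt_scal R_NormedModule), Hh, HX].
  unfold plus, scal; simpl; unfold mult; simpl; ring.
Qed.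

End Averaging.

Lemma avg_ext g h X : 0 <= X -> (forall x, 0 < x < X -> g x = h x) -> avg g X = avg h X.
Proof.
  intros HX E; unfold avg; f_equal; apply RInt_ext.
  intros x Hx; rewrite Rmin_left, Rmax_right in Hx by lra; auto.
Qed.

Lemma iter_avg_ext n g h : (forall x, 0 <= x -> g x = h x) ->
  forall X, 0 <= X -> Nat.iter n avg g X = Nat.iter n avg h X.
Proof.
  intros E; induction n as [|n IH]; intros X HX; [apply E, HX|].
  apply avg_ext; [exact HX|]; intros x Hx; apply IH; lra.
Qed.

Lemma locally_integrable_iter_avg n g :
  locally_integrable g -> locally_integrable (Nat.iter n avg g).
Proof. intros Hg; induction n as [|n IH]; [exact Hg | apply locally_integrable_avg, IH]. Qed.

Lemma iter_avg_plus_scal n g h c : locally_integrable g -> locally_integrable h ->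
  forall X, 0 <= X -> Nat.iter n avg (fun x => g x + c * h x) X
                      = Nat.iter n avg g X + c * Nat.iter n avg h X.
Proof.
  intros Hg Hh; induction n as [|n IH]; intros X HX; [reflexivity|]; simpl.
  rewrite (avg_ext _ (fun x => Nat.iter n avg g x + c * Nat.iter n avg h x)) by
    (auto; intros x Hx; apply IH; lra).
  apply avg_plus_scal; auto using locally_integrable_iter_avg.
Qed.

Lemma is_lim_avg g : locally_integrable g -> is_lim g p_infty 0 -> is_lim (avg g) p_infty 0.
Proof.
  intros Hg Hlim; apply is_lim_spec; intros eps.
  pose proof (cond_pos eps) as Heps.
  destruct (proj2 (is_lim_spec g p_infty 0) Hlim (pos_div_2 eps)) as [A0 HA0]; simpl in HA0.
  set (A := Rmax (A0 + 1) 0).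
  set (K := Rabs (RInt g 0 A)).
  assert (HA : A0 + 1 <= A /\ 0 <= A) by (split; [apply Rmax_l | apply Rmax_r]).
  exists (Rmax A (2 * K / eps)); intros X HX.
  assert (HXA : A < X) by (eapply Rle_lt_trans; [apply Rmax_l | exact HX]).
  assert (HXK : 2 * K / eps < X) by (eapply Rle_lt_trans; [apply Rmax_r | exact HX]).
  (* split [0, X] at [A]: the head contributes [K / X], the tail less than [eps / 2] *)
  rewrite Rminus_0_r; unfold avg.
  rewrite <- (RInt_Chasles g 0 A X) by (apply locally_integrable_ex_RInt; auto; lra).
  assert (Htail : Rabs (RInt g A X) <= (X - A) * (eps / 2)).
  { apply abs_RInt_le_const; [lra | apply locally_integrable_ex_RInt; auto; lra|].
    intros t Ht; left; rewrite <- (Rminus_0_r (g t)); apply HA0; lra. }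
  assert (HK : K < X * (eps / 2)).
  { apply (Rmult_lt_compat_r (eps / 2)) in HXK; [|lra].
    replace (2 * K / eps * (eps / 2)) with K in HXK by (field; lra); exact HXK. }
  rewrite Rabs_mult, Rabs_inv, Rabs_right by lra.
  apply (Rmult_lt_reg_l X); [lra|]; rewrite <- Rmult_assoc, Rinv_r, Rmult_1_l by lra.
  eapply Rle_lt_trans; [apply Rabs_triang|]; fold K; nra.
Qed.

Lemma is_lim_iter_avg n g : locally_integrable g -> is_lim g p_infty 0 ->
  is_lim (Nat.iter n avg g) p_infty 0.
Proof.
  intros Hg Hlim; induction n as [|n IH]; [exact Hlim|].
  apply is_lim_avg; [apply locally_integrable_iter_avg, Hg | exact IH].
Qed.

Lemma is_lim_p_infty_plus_scal_0 g h c :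
  is_lim g p_infty 0 -> is_lim h p_infty 0 -> is_lim (fun x => g x + c * h x) p_infty 0.
Proof.
  intros Hg Hh; pose proof (is_lim_plus' _ _ _ _ _ Hg (is_lim_scal_l h c _ _ Hh)) as H.
  simpl in H; rewrite Rmult_0_r, Rplus_0_l in H; exact H.
Qed.

Lemma is_lim_iter_avg_ext n g h : (forall x, 0 <= x -> g x = h x) ->
  is_lim (Nat.iter n avg g) p_infty 0 -> is_lim (Nat.iter n avg h) p_infty 0.
Proof.
  intros E; apply is_lim_ext_loc; exists 0; intros x Hx; apply iter_avg_ext; auto; lra.
Qed.

Lemma is_lim_iter_avg_plus_scal n g h c : locally_integrable g -> locally_integrable h ->
  is_lim (Nat.iter n avg g) p_infty 0 -> is_lim (Nat.iter n avg h) p_infty 0 ->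
  is_lim (Nat.iter n avg (fun x => g x + c * h x)) p_infty 0.
Proof.
  intros Hg Hh Hlg Hlh.
  apply (is_lim_ext_loc (fun x => Nat.iter n avg g x + c * Nat.iter n avg h x)).
  - exists 0; intros x Hx; symmetry; apply iter_avg_plus_scal; auto; lra.
  - apply is_lim_p_infty_plus_scal_0; assumption.
Qed.

Lemma is_lim_div_p_infty c : is_lim (fun x => c / x) p_infty 0.
Proof.
  pose proof (is_lim_scal_l _ c _ _ (is_lim_inv _ _ _ (is_lim_id p_infty) ltac:(discriminate)))
    as H; simpl in H; rewrite Rmult_0_r in H; exact H.
Qed.

Definition tail (h : R -> R) (x : R) : R := if Rle_dec 1 x then h x else 0.

Lemma tail_le_1 (h : R -> R) x : x < 1 -> tail h x = 0.
Proof. intros Hx; unfold tail; destruct Rle_dec; [lra | reflexivity]. Qed.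

Lemma tail_ge_1 (h : R -> R) x : 1 <= x -> tail h x = h x.
Proof. intros Hx; unfold tail; destruct Rle_dec; [reflexivity | lra]. Qed.

Lemma is_RInt_tail_0_1 (h : R -> R) : is_RInt (tail h) 0 1 0.
Proof.
  apply (is_RInt_ext (fun _ => 0)).
  - intros x Hx; rewrite Rmin_left, Rmax_right in Hx by lra; symmetry; apply tail_le_1; lra.
  - pose proof (@is_RInt_const R_NormedModule 0 1 0) as H.
    unfold scal in H; simpl in H; unfold mult in H; simpl in H; rewrite Rmult_0_r in H; exact H.
Qed.

Lemma is_RInt_tail (h : R -> R) X (l : R) : 1 <= X -> is_RInt h 1 X l -> is_RInt (tail h) 0 X l.
Proof.
  intros HX Hl.
  assert (Htail : is_RInt (tail h) 1 X l).
  { apply (is_RInt_ext h); [|exact Hl].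
    intros x Hx; rewrite Rmin_left, Rmax_right in Hx by lra; symmetry; apply tail_ge_1; lra. }
  pose proof (@is_RInt_Chasles R_NormedModule _ 0 1 X _ _ (is_RInt_tail_0_1 h) Htail) as H.
  unfold plus in H; simpl in H; rewrite Rplus_0_l in H; exact H.
Qed.

Lemma locally_integrable_tail (h : R -> R) : (forall X, 1 <= X -> ex_RInt h 1 X) ->
  locally_integrable (tail h).
Proof.
  intros Hh X HX; destruct (Rle_lt_dec 1 X) as [HX1|HX1].
  - destruct (Hh X HX1) as [l Hl]; exists l; apply is_RInt_tail; assumption.
  - apply (@ex_RInt_Chasles_1 R_CompleteNormedModule _ 0 X 1);
      [lra | exists 0; apply is_RInt_tail_0_1].
Qed.

Lemma RInt_tail (h : R -> R) X : 1 <= X -> ex_RInt h 1 X -> RInt (tail h) 0 X = RInt h 1 X.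
Proof.
  intros HX Hh; apply is_RInt_unique, is_RInt_tail; [exact HX|].
  apply (@RInt_correct R_CompleteNormedModule), Hh.
Qed.

Lemma is_lim_tail (h : R -> R) : is_lim h p_infty 0 -> is_lim (tail h) p_infty 0.
Proof.
  apply is_lim_ext_loc; exists 1; intros x Hx; symmetry; apply tail_ge_1; lra.
Qed.

Lemma frac_part_cell (k : Z) x : IZR k <= x < IZR k + 1 -> frac_part x = x - IZR k.
Proof. intros Hx; unfold frac_part; rewrite <- (Int_part_spec x k) by lra; reflexivity. Qed.

Lemma unit_cells_ind (P : R -> R -> Prop) y X :
  (forall a b c, y <= a <= b -> b <= c -> P a b -> P b c -> P a c) ->
  (forall c d, y <= c <= d -> d <= IZR (Int_part c) + 1 -> P c d) ->
  y <= X -> P y X.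
Proof.
  intros Hglue Hcell HyX.
  assert (Hind : forall n c, y <= c <= X -> X <= IZR (Int_part c) + INR n -> P c X).
  { induction n as [|n IH]; intros c Hc HX; destruct (base_Int_part c) as [Hk1 Hk2].
    - apply Hcell; simpl in HX; lra.
    - destruct (Rle_lt_dec X (IZR (Int_part c) + 1)) as [HX1|HX1]; [apply Hcell; lra|].
      assert (Hk : Int_part (IZR (Int_part c) + 1) = (Int_part c + 1)%Z).
      { symmetry; apply Int_part_spec; rewrite plus_IZR; lra. }
      apply (Hglue _ (IZR (Int_part c) + 1)); [lra | lra | apply Hcell; lra |].
      apply IH; [lra|]; rewrite Hk, plus_IZR; rewrite S_INR in HX; lra. }
  destruct (INR_archimed 1 (X - IZR (Int_part y))) as [n Hn]; [lra|].
  apply (Hind n); [lra|]; rewrite Rmult_1_r in Hn; lra.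
Qed.

(** * Integration by parts against q_r *)

Definition powcos (a b th x : R) : R := exp (a * ln x) * cos (b * ln x + th).

(* With [th = 0] and [th = - (PI / 2)] these are the real and imaginary parts of [fdq]. *)
Definition Fq (a b th : R) (r : nat) (x : R) : R := powcos a b th x * q r (frac_part x).

Lemma cos_sub_PI2 w : cos (w - PI / 2) = sin w.
Proof. replace (w - PI / 2) with (- (PI / 2 - w)) by ring; rewrite cos_neg; apply cos_shift. Qed.

Lemma powcos_pred a b th x : 0 < x -> powcos (a - 1) b th x = powcos a b th x / x.
Proof.
  intros Hx; unfold powcos; replace ((a - 1) * ln x) with (a * ln x + - ln x) by ring.
  rewrite exp_plus, exp_Ropp, exp_ln by exact Hx; field; lra.
Qed.

Lemma is_derive_powcos a b th x : 0 < x ->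
  is_derive (powcos a b th) x (a * powcos (a - 1) b th x - b * powcos (a - 1) b (th - PI / 2) x).
Proof.
  intros Hx; rewrite !powcos_pred by exact Hx; unfold powcos.
  auto_derive; [auto|].
  replace (b * ln x + (th - PI / 2)) with (b * ln x + th - PI / 2) by ring.
  rewrite cos_sub_PI2; field; lra.
Qed.

Lemma continuous_powcos a b th x : 0 < x -> continuous (powcos a b th) x.
Proof.
  intros Hx; apply (@ex_derive_continuous R_AbsRing R_NormedModule).
  eexists; apply is_derive_powcos, Hx.
Qed.

Lemma abs_powcos_le a b th x : Rabs (powcos a b th x) <= exp (a * ln x).
Proof.
  unfold powcos; rewrite Rabs_mult, (Rabs_right (exp _)) by (left; apply exp_pos).
  rewrite <- (Rmult_1_r (exp (a * ln x))) at 2.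
  apply Rmult_le_compat_l; [left; apply exp_pos | apply Rabs_le, COS_bound].
Qed.

Lemma continuous_powcos_q_shift a b th r c x : 0 < x ->
  continuous (fun y => powcos a b th y * q r (y - c)) x.
Proof.
  intros Hx; apply (continuous_mult (powcos a b th)); [apply continuous_powcos, Hx|].
  apply (continuous_comp (fun y => y - c) (q r)); [|apply continuous_q].
  apply (continuous_minus (fun y => y) (fun _ => c));
    [apply continuous_id | apply continuous_const].
Qed.

Lemma is_derive_powcos_q_shift a b th r c x : (1 <= r)%nat -> 0 < x ->
  is_derive (fun y => powcos a b th y * q (S r) (y - c)) x
    (powcos a b th x * q r (x - c)
     + (a * (powcos (a - 1) b th x * q (S r) (x - c))
        - b * (powcos (a - 1) b (th - PI / 2) x * q (S r) (x - c)))).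
Proof.
  intros Hr Hx.
  assert (Hq : is_derive (fun y => q (S r) (y - c)) x (q r (x - c))).
  { pose proof (is_derive_comp (q (S r)) (fun y => y - c) x _ 1 (is_derive_q r (x - c) Hr))
      as H.
    unfold scal in H; simpl in H; unfold mult in H; simpl in H; rewrite Rmult_1_l in H.
    apply H; auto_derive; [exact I | ring]. }
  pose proof (is_derive_mult _ _ _ _ _ (is_derive_powcos a b th x Hx) Hq Rmult_comm) as H.
  unfold plus, mult in H; simpl in H; unfold mult in H; simpl in H.
  match goal with |- is_derive _ _ ?v => replace v with
    ((a * powcos (a - 1) b th x - b * powcos (a - 1) b (th - PI / 2) x) * q (S r) (x - c)
     + powcos a b th x * q r (x - c)) by ring end; exact H.
Qed.

Lemma Fq_cell a b th r (k : Z) x : IZR k <= x < IZR k + 1 ->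
  Fq a b th r x = powcos a b th x * q r (x - IZR k).
Proof. intros Hx; unfold Fq; rewrite (frac_part_cell _ x Hx); reflexivity. Qed.

Lemma ex_RInt_Fq a b th r y X : 0 < y -> y <= X -> ex_RInt (Fq a b th r) y X.
Proof.
  intros Hy; apply unit_cells_ind.
  - intros u v w _ _ Huv Hvw; apply (ex_RInt_Chasles _ _ v); assumption.
  - intros c d Hcd Hd; destruct (base_Int_part c) as [Hk1 Hk2].
    set (k := Int_part c) in *.
    apply (ex_RInt_ext (fun x => powcos a b th x * q r (x - IZR k))).
    + intros x Hx; rewrite Rmin_left, Rmax_right in Hx by lra; symmetry; apply Fq_cell; lra.
    + apply (@ex_RInt_continuous R_CompleteNormedModule); intros x Hx.
      rewrite Rmin_left, Rmax_right in Hx by lra; apply continuous_powcos_q_shift; lra.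
Qed.

Lemma is_RInt_Fq_by_parts a b th r y X : (1 <= r)%nat -> 0 < y -> y <= X ->
  is_RInt (fun x => Fq a b th r x
                    + (a * Fq (a - 1) b th (S r) x - b * Fq (a - 1) b (th - PI / 2) (S r) x))
    y X (Fq a b th (S r) X - Fq a b th (S r) y).
Proof.
  intros Hr Hy; apply (unit_cells_ind (fun u v => is_RInt (fun x => Fq a b th r x
    + (a * Fq (a - 1) b th (S r) x - b * Fq (a - 1) b (th - PI / 2) (S r) x))
    u v (Fq a b th (S r) v - Fq a b th (S r) u))).
  - intros u v w _ _ Huv Hvw.
    pose proof (@is_RInt_Chasles R_NormedModule _ u v w _ _ Huv Hvw) as H.
    unfold plus in H; simpl in H.
    replace (Fq a b th (S r) w - Fq a b th (S r) u) with
      (Fq a b th (S r) v - Fq a b th (S r) u + (Fq a b th (S r) w - Fq a b th (S r) v)) by ring.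
    exact H.
  - intros c d Hcd Hd; destruct (base_Int_part c) as [Hk1 Hk2].
    set (k := Int_part c) in *.
    set (Sq y := powcos a b th y * q (S r) (y - IZR k)).
    (* at the right end of the cell [frac_part] jumps back to 0, but [q (S r) 1 = q (S r) 0] *)
    assert (Hends : Fq a b th (S r) d - Fq a b th (S r) c = minus (Sq d) (Sq c)).
    { unfold minus, plus, opp; simpl; unfold Sq.
      rewrite (Fq_cell _ _ _ _ k c) by lra.
      destruct (Rle_lt_or_eq_dec d (IZR k + 1) Hd) as [Hd1| ->].
      - rewrite (Fq_cell _ _ _ _ k d) by lra; ring.
      - unfold Fq; rewrite (frac_part_cell (k + 1)), plus_IZR by (rewrite plus_IZR; lra).
        replace (IZR k + 1 - (IZR k + 1)) with 0 by ring.
        replace (IZR k + 1 - IZR k) with 1 by ring.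
        rewrite q_S_1 by exact Hr; ring. }
    rewrite Hends; apply (is_RInt_ext (fun x => powcos a b th x * q r (x - IZR k)
      + (a * (powcos (a - 1) b th x * q (S r) (x - IZR k))
         - b * (powcos (a - 1) b (th - PI / 2) x * q (S r) (x - IZR k))))).
    + intros x Hx; rewrite Rmin_left, Rmax_right in Hx by lra.
      rewrite !(Fq_cell _ _ _ _ k x) by lra; reflexivity.
    + apply (@is_RInt_derive R_CompleteNormedModule); intros x Hx;
        rewrite Rmin_left, Rmax_right in Hx by lra.
      * apply is_derive_powcos_q_shift; [exact Hr | lra].
      * assert (Hx0 : 0 < x) by lra.
        set (f1 y := powcos a b th y * q r (y - IZR k)).
        set (f2 y := powcos (a - 1) b th y * q (S r) (y - IZR k)).
        set (f3 y := powcos (a - 1) b (th - PI / 2) y * q (S r) (y - IZR k)).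
        assert (Hc : forall f, continuous f x -> forall c, continuous (fun y => c * f y) x).
        { intros f Hf c0; apply (continuous_mult (fun _ => c0) f);
            [apply continuous_const | exact Hf]. }
        apply (continuous_plus f1 (fun y => a * f2 y - b * f3 y));
          [apply continuous_powcos_q_shift, Hx0|].
        apply (continuous_minus (fun y => a * f2 y) (fun y => b * f3 y));
          apply Hc, continuous_powcos_q_shift, Hx0.
Qed.

Lemma RInt_plus_lin (f g h : R -> R) (a b u v : R) :
  ex_RInt f u v -> ex_RInt g u v -> ex_RInt h u v ->
  RInt (fun x => f x + (a * g x - b * h x)) u v = RInt f u v + (a * RInt g u v - b * RInt h u v).
Proof.
  intros Hf Hg Hh.
  change (fun x => f x + (a * g x - b * h x))
    with (fun x => plus (f x) (minus (scal a (g x)) (scal b (h x)))).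
  rewrite (@RInt_plus R_CompleteNormedModule), (@RInt_minus R_CompleteNormedModule),
    !(@RInt_scal R_CompleteNormedModule); try assumption.
  - reflexivity.
  - apply (@ex_RInt_scal R_NormedModule), Hg.
  - apply (@ex_RInt_scal R_NormedModule), Hh.
  - apply (@ex_RInt_minus R_NormedModule); apply (@ex_RInt_scal R_NormedModule); assumption.
Qed.

Lemma RInt_Fq_by_parts a b th r X : (1 <= r)%nat -> 1 <= X ->
  RInt (Fq a b th r) 1 X =
    Fq a b th (S r) X - Fq a b th (S r) 1
    - a * RInt (Fq (a - 1) b th (S r)) 1 X + b * RInt (Fq (a - 1) b (th - PI / 2) (S r)) 1 X.
Proof.
  intros Hr HX.
  pose proof (is_RInt_unique _ _ _ _ (is_RInt_Fq_by_parts a b th r 1 X Hr Rlt_0_1 HX)) as H.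
  rewrite RInt_plus_lin in H by (apply ex_RInt_Fq; lra); lra.
Qed.

Lemma RInt_tail_le_1 (h : R -> R) X : X <= 1 -> RInt (tail h) 0 X = 0.
Proof.
  intros HX; rewrite (RInt_ext _ (fun _ => 0)), RInt_const.
  - unfold scal; simpl; unfold mult; simpl; ring.
  - intros x Hx; apply tail_le_1.
    destruct (Rle_dec 0 X); [rewrite Rmax_right in Hx | rewrite Rmax_left in Hx]; lra.
Qed.

(* Integration by parts on [1, X], divided by X. *)
Lemma avg_tail_Fq a b th r X : (1 <= r)%nat -> 0 <= X ->
  avg (tail (Fq a b th r)) X =
    tail (Fq (a - 1) b th (S r)) X + tail (fun x => - Fq a b th (S r) 1 / x) X
    + - a * avg (tail (Fq (a - 1) b th (S r))) X
    + b * avg (tail (Fq (a - 1) b (th - PI / 2) (S r))) X.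
Proof.
  intros Hr HX; unfold avg; destruct (Rlt_le_dec X 1) as [HX1|HX1].
  - rewrite !RInt_tail_le_1, !tail_le_1 by lra; ring.
  - rewrite !RInt_tail, !tail_ge_1, RInt_Fq_by_parts by (auto; apply ex_RInt_Fq; lra).
    unfold Fq; rewrite (powcos_pred a) by lra; field; lra.
Qed.

Lemma locally_integrable_tail_Fq a b th r : locally_integrable (tail (Fq a b th r)).
Proof. apply locally_integrable_tail; intros X HX; apply ex_RInt_Fq; lra. Qed.

Lemma locally_integrable_tail_div c : locally_integrable (tail (fun x => c / x)).
Proof.
  apply locally_integrable_tail; intros X HX.
  apply (@ex_RInt_continuous R_CompleteNormedModule); intros x Hx.
  rewrite Rmin_left, Rmax_right in Hx by lra.
  apply (continuous_mult (fun _ => c) (fun x => / x));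
    [apply continuous_const | apply continuous_Rinv; lra].
Qed.

Lemma is_lim_Fq_neg a b th r : a < 0 -> is_lim (Fq a b th r) p_infty 0.
Proof.
  intros Ha; destruct (q_frac_bounded r) as [Mq HMq].
  assert (Hpow : is_lim (fun x => exp (a * ln x)) p_infty 0).
  { apply (is_lim_comp exp (fun x => a * ln x) p_infty 0 m_infty); [apply is_lim_exp_m| |].
    - pose proof (is_lim_scal_l _ a _ _ is_lim_ln_p) as H.
      simpl in H; destruct Rle_dec in H; [lra | exact H].
    - exists 0; intros x _; discriminate. }
  apply (is_lim_le_le_loc (fun x => - (Mq * exp (a * ln x))) (fun x => Mq * exp (a * ln x))).
  - exists 0; intros x _; apply Rabs_le_between; unfold Fq.
    rewrite Rabs_mult, Rmult_comm; apply Rmult_le_compat; try apply Rabs_pos;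
      [apply HMq | apply abs_powcos_le].
  - pose proof (is_lim_opp _ _ _ (is_lim_scal_l _ Mq _ _ Hpow)) as H.
    simpl in H; rewrite Rmult_0_r, Ropp_0 in H; exact H.
  - pose proof (is_lim_scal_l _ Mq _ _ Hpow) as H; simpl in H; rewrite Rmult_0_r in H; exact H.
Qed.

Lemma is_lim_iter_avg_tail_Fq m : forall a b th r, (1 <= r)%nat -> a < INR m ->
  is_lim (Nat.iter m avg (tail (Fq a b th r))) p_infty 0.
Proof.
  induction m as [|m IH]; intros a b th r Hr Ha.
  - apply is_lim_tail, is_lim_Fq_neg; simpl in Ha; lra.
  - rewrite S_INR in Ha; rewrite Nat.iter_succ_r.
    set (E1 := tail (Fq (a - 1) b th (S r))).
    set (E2 := tail (Fq (a - 1) b (th - PI / 2) (S r))).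
    set (E0 := tail (fun x => - Fq a b th (S r) 1 / x)).
    assert (I1 : locally_integrable E1) by apply locally_integrable_tail_Fq.
    assert (I2 : locally_integrable E2) by apply locally_integrable_tail_Fq.
    assert (I0 : locally_integrable E0) by apply locally_integrable_tail_div.
    assert (L1 : is_lim (Nat.iter m avg E1) p_infty 0) by (apply IH; [lia | lra]).
    assert (L2 : is_lim (Nat.iter m avg E2) p_infty 0) by (apply IH; [lia | lra]).
    assert (L0 : is_lim (Nat.iter m avg E0) p_infty 0).
    { apply is_lim_iter_avg; [exact I0|]; apply is_lim_tail, is_lim_div_p_infty. }
    assert (LavgE : forall g, locally_integrable g -> is_lim (Nat.iter m avg g) p_infty 0 ->
                      is_lim (Nat.iter m avg (avg g)) p_infty 0).
    { intros g Hg Hl; rewrite <- Nat.iter_succ_r; apply is_lim_avg; [|exact Hl].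
      apply locally_integrable_iter_avg, Hg. }
    apply (is_lim_iter_avg_ext _ (fun x => ((E1 x + 1 * E0 x) + - a * avg E1 x) + b * avg E2 x)).
    { intros x Hx; rewrite avg_tail_Fq by assumption; fold E1 E2 E0; ring. }
    repeat apply is_lim_iter_avg_plus_scal;
      auto using locally_integrable_plus_scal, locally_integrable_avg.
Qed.

Lemma locally_integrable_Fq a b th r : 0 <= a -> locally_integrable (Fq a b th r).
Proof.
  intros Ha X HX; destruct (Rle_lt_or_eq_dec 0 X HX) as [HX0| <-]; [|apply ex_RInt_point].
  destruct (q_frac_bounded r) as [Mq HMq].
  assert (HMq0 : 0 <= Mq) by (eapply Rle_trans; [apply Rabs_pos | apply (HMq 0)]).
  set (K := exp (a * Rabs (ln X))).
  assert (HK : 0 < K) by apply exp_pos.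
  assert (HKMq : 0 <= K * Mq) by (apply Rmult_le_pos; lra).
  apply (ex_RInt_0_of_bounded _ X (Rabs (Fq a b th r 0) + K * Mq) HX0).
  - intros x [Hx0 HxX]; destruct (Rle_lt_or_eq_dec 0 x Hx0) as [Hx| <-]; [|lra].
    assert (Hpow : exp (a * ln x) <= K).
    { assert (Hle : a * ln x <= a * Rabs (ln X)).
      { apply Rmult_le_compat_l; [exact Ha|].
        apply Rle_trans with (ln X); [apply ln_le; lra | apply Rle_abs]. }
      destruct (Rle_lt_or_eq_dec _ _ Hle) as [Hlt|Heq];
        [left; apply exp_increasing, Hlt | right; unfold K; rewrite Heq; reflexivity]. }
    unfold Fq at 1; rewrite Rabs_mult.
    pose proof (abs_powcos_le a b th x); pose proof (HMq x); pose proof (Rabs_pos (Fq a b th r 0)).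
    pose proof (Rabs_pos (q r (frac_part x))); pose proof (Rabs_pos (powcos a b th x)); nra.
  - intros e He; apply ex_RInt_Fq; lra.
Qed.

Lemma is_lim_iter_avg_Fq m a b th r : (1 <= r)%nat -> 0 <= a -> a < INR (S m) ->
  is_lim (Nat.iter (S m) avg (Fq a b th r)) p_infty 0.
Proof.
  intros Hr Ha Ham.
  set (F := Fq a b th r).
  set (D x := F x + -1 * tail F x).
  assert (IF : locally_integrable F) by (apply locally_integrable_Fq, Ha).
  assert (IT : locally_integrable (tail F)) by apply locally_integrable_tail_Fq.
  assert (ID : locally_integrable D) by (apply locally_integrable_plus_scal; assumption).
  (* [D] vanishes on [1, oo), so its average there is [RInt F 0 1 / X] *)
  assert (HD : forall X, 1 <= X -> avg D X = RInt F 0 1 / X).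
  { intros X HX; unfold D; rewrite avg_plus_scal by (auto; lra); unfold avg.
    rewrite RInt_tail by (auto; apply ex_RInt_Fq; lra).
    rewrite <- (RInt_Chasles F 0 1 X) by (apply IF || apply ex_RInt_Fq; lra).
    unfold plus; simpl; field; lra. }
  apply (is_lim_iter_avg_ext _ (fun x => tail F x + 1 * D x)); [intros x _; unfold D; ring|].
  apply is_lim_iter_avg_plus_scal; [exact IT | exact ID | |].
  - apply is_lim_iter_avg_tail_Fq; assumption.
  - rewrite Nat.iter_succ_r; apply is_lim_iter_avg; [apply locally_integrable_avg, ID|].
    apply (is_lim_ext_loc (fun X => RInt F 0 1 / X)); [|apply is_lim_div_p_infty].
    exists 1; intros X HX; symmetry; apply HD; lra.
Qed.

(** * From real and imaginary parts to the complex statement *)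

Lemma RInt_C_pair (g : R -> C) a b :
  ex_RInt (fun t => fst (g t)) a b -> ex_RInt (fun t => snd (g t)) a b ->
  RInt (V := C_R_CompleteNormedModule) g a b
  = (RInt (fun t => fst (g t)) a b, RInt (fun t => snd (g t)) a b).
Proof.
  intros H1 H2; apply (@is_RInt_unique C_R_CompleteNormedModule).
  apply (@is_RInt_fct_extend_pair R_NormedModule R_NormedModule);
    apply (@RInt_correct R_CompleteNormedModule); assumption.
Qed.

Lemma iter_Pavg_pair n (h : R -> C) h1 h2 :
  locally_integrable h1 -> locally_integrable h2 ->
  (forall x, 0 <= x -> h x = (h1 x, h2 x)) ->
  forall X, 0 <= X -> Nat.iter n Pavg h X = (Nat.iter n avg h1 X, Nat.iter n avg h2 X).
Proof.
  intros I1 I2 Hh; induction n as [|n IH]; intros X HX; [apply Hh, HX|]; simpl; unfold Pavg.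
  rewrite (RInt_ext (V := C_R_CompleteNormedModule) _
             (fun x => (Nat.iter n avg h1 x, Nat.iter n avg h2 x))).
  - rewrite RInt_C_pair by (apply locally_integrable_iter_avg; assumption).
    cbn [fst snd]; unfold Cmult, RtoC; cbn [fst snd].
    change (fun t => Nat.iter n avg h1 t) with (Nat.iter n avg h1).
    change (fun t => Nat.iter n avg h2 t) with (Nat.iter n avg h2).
    f_equal; change (avg ?g X) with (/ X * RInt g 0 X); ring.
  - intros x Hx; rewrite Rmin_left, Rmax_right in Hx by lra; apply IH; lra.
Qed.

Lemma filterlim_C_pair (f : R -> C) f1 f2 : (forall x, 0 <= x -> f x = (f1 x, f2 x)) ->
  is_lim f1 p_infty 0 -> is_lim f2 p_infty 0 ->
  filterlim f (Rbar_locally p_infty) (locally (RtoC 0)).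
Proof.
  intros Hf L1 L2; apply filterlim_locally; intros eps.
  destruct (proj2 (is_lim_spec _ _ _) L1 eps) as [A1 HA1].
  destruct (proj2 (is_lim_spec _ _ _) L2 eps) as [A2 HA2].
  exists (Rmax 0 (Rmax A1 A2)); intros x Hx.
  pose proof (Rmax_l 0 (Rmax A1 A2)); pose proof (Rmax_r 0 (Rmax A1 A2)).
  pose proof (Rmax_l A1 A2); pose proof (Rmax_r A1 A2).
  rewrite Hf by lra; split; [apply HA1 | apply HA2]; lra.
Qed.

Lemma fdq_Fq a b r x : fdq (a, b) r x = (Fq a b 0 r x, Fq a b (- (PI / 2)) r x).
Proof.
  unfold fdq, cpow, Fq, powcos, Cmult, RtoC; simpl.
  replace (b * ln x + - (PI / 2)) with (b * ln x - PI / 2) by ring.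
  rewrite cos_sub_PI2, Rplus_0_r; f_equal; ring.
Qed.

Lemma lt_INR_S_Int_part a : 0 <= a -> a < INR (S (Z.to_nat (Int_part a))).
Proof.
  intros Ha; destruct (base_Int_part a) as [H1 H2].
  assert (Hk : (0 <= Int_part a)%Z) by (cut (-1 < Int_part a)%Z; [lia | apply lt_IZR; lra]).
  rewrite S_INR, INR_IZR_INZ, Z2Nat.id by exact Hk; lra.
Qed.

Theorem mainTheorem2 (delta : C) (r : nat) :
  delta <> RtoC 0 -> 0 <= Re delta -> (1 <= r)%nat ->
  filterlim
    (Nat.iter (S (Z.to_nat (Int_part (Re delta)))) Pavg (fdq delta r))
    (Rbar_locally p_infty) (locally (RtoC 0)).
Proof.
  intros _ Ha Hr; destruct delta as [a b]; change (Re (a, b)) with a in *.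
  pose proof (lt_INR_S_Int_part a Ha) as Ham.
  apply (filterlim_C_pair _ (Nat.iter (S (Z.to_nat (Int_part a))) avg (Fq a b 0 r))
                           (Nat.iter (S (Z.to_nat (Int_part a))) avg (Fq a b (- (PI / 2)) r))).
  - intros X HX; apply iter_Pavg_pair; [apply locally_integrable_Fq, Ha.. | |exact HX].
    intros x _; apply fdq_Fq.
  - apply is_lim_iter_avg_Fq; assumption.
  - apply is_lim_iter_avg_Fq; assumption.
Qed.
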